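(* In type $A_r$, let $\theta$ be the highest root and, for $1 \le m \le r$, let $C_m = s_m s_{m+1} \cdots s_r\, s_{m-1} s_{m-2} \cdots s_1$ (so $C_1 = s_1 s_2\cdots s_r$ and $C_r = s_r s_{r-1}\cdots s_1$). Then $C_m(\theta) = -\alpha_m$ for each $m$, and for any Coxeter element $c$ of $W(A_r)$ (a product of all simple reflections, each exactly once, in some order), $c(\theta) > 0$ if and only if $c \notin \{C_1, \dots, C_r\}$.
   Context: Type $A_r$ is realized in $\mathbb{R}^{r+1}$ with orthonormal basis $e_1,\dots,e_{r+1}$, positive roots $e_i - e_j$ ($i<j$), simple roots $\alpha_i = e_i - e_{i+1}$, and $s_i$ swapping $e_i$ and $e_{i+1}$; the highest root is $\theta = e_1 - e_{r+1}$. Products of reflections act by composition (rightmost factor applied first). $\gamma>0$ means $\gamma$ is a positive root. *)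

(* Type A_r realized in R^{r+1} (row vectors 'rV[R]_(r.+1)),
   R any real field; coordinates are 0-based: e_k for k : 'I_(r.+1),
   simple roots alpha_i for i : 'I_r (paper's alpha_{i+1}). *)
From mathcomp Require Import all_boot all_order all_algebra all_fingroup.
Set Implicit Arguments. Unset Strict Implicit. Unset Printing Implicit Defensive.
Import Order.TTheory GRing.Theory Num.Theory.
Local Open Scope ring_scope.

Section TypeA.
Variables (R : realFieldType) (r : nat).

Definition vec := 'rV[R]_(r.+1).

Definition e (k : 'I_(r.+1)) : vec := \row_j (j == k)%:R.

Definition lo (i : 'I_r) : 'I_(r.+1) := widen_ord (leqnSn r) i.
Definition hi (i : 'I_r) : 'I_(r.+1) := lift ord0 i.

Definition alpha (i : 'I_r) : vec := e (lo i) - e (hi i).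

Definition theta : vec := e ord0 - e ord_max.

Definition pos_root (v : vec) : Prop :=
  exists i j : 'I_(r.+1), (i < j)%N /\ v = e i - e j.

Definition s (i : 'I_r) (v : vec) : vec :=
  \row_k v 0 (tperm (lo i) (hi i) k).

(* product s_{w_1} s_{w_2} ... s_{w_n} acting by composition
   (rightmost factor applied first) *)
Definition wprod (w : seq 'I_r) : vec -> vec :=
  foldr (fun i f => s i \o f) id w.

(* C_m = s_m s_{m+1} ... s_r s_{m-1} ... s_1, 0-based index m *)
Definition Cword (m : 'I_r) : seq 'I_r :=
  [seq i : 'I_r <- enum 'I_r | (m <= i)%N] ++ rev [seq i : 'I_r <- enum 'I_r | (i < m)%N].

Definition C (m : 'I_r) : vec -> vec := wprod (Cword m).

End TypeA.

Arguments e : clear implicits.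
Arguments alpha : clear implicits.
Arguments theta : clear implicits.
Arguments pos_root : clear implicits.
Arguments s : clear implicits.
Arguments wprod : clear implicits.
Arguments C : clear implicits.

(* A word w in the simple reflections permutes the basis vectors,
   w e_k = e_(σ k), so w θ = e_(σ 0) - e_(σ r) is a positive root exactly when
   σ 0 < σ r.  In a Coxeter word, once s_j stands left of s_(j+1) the index 0
   can never be carried beyond j+1, and once s_(j+1) stands left of s_j the
   index r can never drop below j+1.  Hence σ r <= σ 0 forces "s_j left of
   s_(j+1)" to hold exactly for j >= m, for some m.  Non-adjacent reflections
   commute, so a Coxeter element is determined by these relative orders, and
   this orientation is the one of C_m; finally C_m θ = e_(m+1) - e_m = -α_m. *)

From mathcomp Require Import all_boot all_order all_algebra all_fingroup.
From mathcomp Require Import zify lra.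
From Stdlib Require Import FunctionalExtensionality.
Set Implicit Arguments.
Unset Strict Implicit.
Unset Printing Implicit Defensive.
Import GRing.Theory Num.Theory.

(* 0-based indices: [adj_swap i] is the action of s_i on basis indices, so the
   word with letters [u] maps e_x to e_(adj_swaps u x). *)
Definition adj_swap (i x : nat) : nat :=
  if x == i then i.+1 else if x == i.+1 then i else x.

Definition adj_swaps (u : seq nat) (x : nat) : nat := foldr adj_swap x u.

(* s_j stands left of s_(j+1) in the word [u], i.e. acts after it. *)
Definition before (u : seq nat) (j : nat) : bool := index j u < index j.+1 u.

Lemma adj_swapL i : adj_swap i i = i.+1.
Proof. by rewrite /adj_swap eqxx. Qed.

Lemma adj_swapR i : adj_swap i i.+1 = i.
Proof. by rewrite /adj_swap eqxx; case: eqP => //; lia. Qed.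

Lemma adj_swap_id i x : x != i -> x != i.+1 -> adj_swap i x = x.
Proof. by rewrite /adj_swap => /negbTE -> /negbTE ->. Qed.

Lemma adj_swaps_cat u v x : adj_swaps (u ++ v) x = adj_swaps u (adj_swaps v x).
Proof. by rewrite /adj_swaps foldr_cat. Qed.

Lemma adj_swaps_id u x : {in u, forall i, (x != i) && (x != i.+1)} ->
  adj_swaps u x = x.
Proof.
elim: u => [|i u IHu] //= xNu.
have /andP[xi xi1] := xNu i (mem_head i u).
by rewrite IHu ?adj_swap_id // => k ku; apply: xNu; rewrite in_cons ku orbT.
Qed.

Lemma before_cons_notin i u j : i \notin u -> j \in u -> j.+1 \in u ->
  before (i :: u) j = before u j.
Proof.
move=> /memPn iNu ju j1u.
by rewrite /before /= !(eq_sym i) (negbTE (iNu _ ju)) (negbTE (iNu _ j1u)).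
Qed.

(* The second conjunct is the induction invariant: j+1 is reached only via s_j. *)
Lemma adj_swaps_le u j x : uniq u -> (j \in u -> j.+1 \in u -> before u j) ->
  x <= j -> adj_swaps u x <= j.+1 /\ (adj_swaps u x = j.+1 -> j \in u).
Proof.
move=> + + lexj; elim: u => [|i u IHu] /=; first by split=> //; lia.
case/andP=> iNu uu bef.
have bef_u : j \in u -> j.+1 \in u -> before u j.
  move=> ju j1u; rewrite -(before_cons_notin iNu ju j1u).
  by apply: bef; rewrite in_cons ?ju ?j1u orbT.
have [le_y y_j1] := IHu uu bef_u.
rewrite -/(adj_swaps u x); set y := adj_swaps u x in le_y y_j1 *.
have [yi|yNi] := eqVneq y i.
  rewrite yi adj_swapL in le_y y_j1 *; have [ij|iNj] := eqVneq i j.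
    by rewrite ij mem_head.
  have [i_j1|iNj1] := eqVneq i j.+1; last by split=> [|?]; lia.
  have ju : j \in i :: u by rewrite in_cons y_j1 ?orbT.
  by move: (bef ju); rewrite /before -i_j1 /= eqxx ltn0 mem_head => /(_ isT).
have [yi1|yNi1] := eqVneq y i.+1.
  by rewrite yi1 adj_swapR; split; lia.
by rewrite adj_swap_id // in_cons; split=> // /y_j1 ->; rewrite orbT.
Qed.

Lemma adj_swaps_ge u j x : uniq u -> (j \in u -> j.+1 \in u -> ~~ before u j) ->
  j.+2 <= x -> j.+1 <= adj_swaps u x /\ (adj_swaps u x = j.+1 -> j.+1 \in u).
Proof.
move=> + + lejx; elim: u => [|i u IHu] /=; first by split=> [|?]; lia.
case/andP=> iNu uu bef.
have bef_u : j \in u -> j.+1 \in u -> ~~ before u j.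
  move=> ju j1u; rewrite -(before_cons_notin iNu ju j1u).
  by apply: bef; rewrite in_cons ?ju ?j1u orbT.
have [ge_y y_j1] := IHu uu bef_u.
rewrite -/(adj_swaps u x); set y := adj_swaps u x in ge_y y_j1 *.
have [yi|yNi] := eqVneq y i.
  by rewrite yi adj_swapL; split=> [|?]; lia.
have [yi1|yNi1] := eqVneq y i.+1; last first.
  by rewrite adj_swap_id // in_cons; split=> // /y_j1 ->; rewrite orbT.
rewrite yi1 adj_swapR in ge_y y_j1 *; have [ij1|iNj1] := eqVneq i j.+1.
  by rewrite ij1 mem_head.
have [i_j|iNj] := eqVneq i j; last by split=> [|?]; lia.
have j1u : j.+1 \in i :: u by rewrite in_cons y_j1 ?orbT // i_j.
have ju : j \in i :: u by rewrite -i_j mem_head.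
move: (bef ju j1u); rewrite /before -i_j /= eqxx.
by case: eqP => //; lia.
Qed.

Lemma before_monotone u n i j : uniq u -> adj_swaps u n <= adj_swaps u 0 ->
  i <= j -> j.+2 <= n -> before u i -> before u j.
Proof.
move=> uu le_n0 le_ij le_jn bi; have [<- //|lt_ij] := eqVneq i j.
apply/negPn/negP => nbj.
have [le0 _] := adj_swaps_le (x := 0) uu (fun _ _ => bi) (leq0n i).
have [gen _] := adj_swaps_ge uu (fun _ _ => nbj) le_jn.
lia.
Qed.

Lemma monotone_find_threshold (P : pred nat) n :
  (forall i j, i <= j < n -> P i -> P j) ->
  forall j, j < n -> P j = (find P (iota 0 n) <= j).
Proof.
move=> Pmono j ltjn; set m := find P (iota 0 n).
have [ltjm|lemj] := ltnP j m.
  by have := before_find 0 ltjm; rewrite nth_iota.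
have hasP : has P (iota 0 n) by rewrite has_find size_iota; lia.
apply: (Pmono m); first lia.
by have := nth_find 0 hasP; rewrite nth_iota //; lia.
Qed.

Lemma index_iota a n x : a <= x < a + n -> index x (iota a n) = x - a.
Proof.
move=> /andP[le_ax lt_x]; rewrite -{1}(subnKC le_ax) -(@nth_iota 0 a n).
  by rewrite index_uniq ?size_iota ?iota_uniq //; lia.
lia.
Qed.

Lemma filter_iota_geq m n : m <= n -> [seq k <- iota 0 n | m <= k] = iota m (n - m).
Proof.
move=> le_mn; rewrite -{1}(subnKC le_mn) iotaD filter_cat (@eq_in_filter _ _ pred0).
  by rewrite filter_pred0 add0n; apply/all_filterP/allP => k; rewrite mem_iota => /andP[].
by move=> k; rewrite mem_iota /=; lia.
Qed.

Lemma rev_iotaS m : rev (iota 0 m.+1) = m :: rev (iota 0 m).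
Proof. by rewrite -addn1 iotaD rev_cat. Qed.

Lemma index_rev_iota m x : x < m -> index x (rev (iota 0 m)) = m.-1 - x.
Proof.
elim: m => [|m IHm] lt_xm //; rewrite rev_iotaS /=.
by case: eqP => [->|xNm]; [rewrite subnn | rewrite IHm; lia].
Qed.

Lemma adj_swaps_rev_iota m : adj_swaps (rev (iota 0 m)) 0 = m.
Proof.
by elim: m => [|m IHm] //; rewrite rev_iotaS /= -/(adj_swaps _ _) IHm adj_swapL.
Qed.

Lemma adj_swaps_iota a n : adj_swaps (iota a n) (a + n) = a.
Proof.
elim: n a => [|n IHn] a; first by rewrite addn0.
by rewrite /= -/(adj_swaps _ _) -addSnnS IHn adj_swapR.
Qed.

Definition cword r m := iota m (r - m) ++ rev (iota 0 m).

Lemma cword_swaps0 r m : m < r -> adj_swaps (cword r m) 0 = m.+1.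
Proof.
move=> lt_mr; rewrite adj_swaps_cat adj_swaps_rev_iota.
have -> : r - m = (r - m.+1).+1 by lia.
rewrite /= -/(adj_swaps _ _) adj_swaps_id ?adj_swapL // => i.
by rewrite mem_iota => lt_i; apply/andP; split; apply/eqP; lia.
Qed.

Lemma cword_swapsr r m : m < r -> adj_swaps (cword r m) r = m.
Proof.
move=> lt_mr; rewrite adj_swaps_cat (@adj_swaps_id (rev (iota 0 m)) r).
  by have := adj_swaps_iota m (r - m); rewrite subnKC 1?ltnW.
by move=> i; rewrite mem_rev mem_iota => lt_i; apply/andP; split; apply/eqP; lia.
Qed.

Lemma before_cword r m j : m < r -> j.+1 < r -> before (cword r m) j = (m <= j).
Proof.
move=> lt_mr lt_jr; rewrite /before /cword !index_cat !mem_iota size_iota.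
by case: ifP => ?; case: ifP => ?; rewrite ?index_iota ?index_rev_iota; lia.
Qed.

Lemma index_insert (T : eqType) (v1 v2 : seq T) (i a : T) : a != i ->
  index a (v1 ++ i :: v2) = bump (size v1) (index a (v1 ++ v2)).
Proof.
move=> /negbTE aNi; rewrite !index_cat /= eq_sym aNi /bump.
case: ifP => av1; first by rewrite leqNgt index_mem av1.
by rewrite leq_addr add1n addnS.
Qed.

Section PartialCommutation.
Variables (I : eqType) (T : Type) (f : I -> T -> T) (adj : rel I).
Hypothesis f_comm :
  forall a b, ~~ adj a b -> ~~ adj b a -> forall x, f a (f b x) = f b (f a x).

Local Notation comp u := (foldr (fun i g => f i \o g) id u).

Lemma comp_cat u v x : comp (u ++ v) x = comp u (comp v x).
Proof. by rewrite foldr_cat; elim: u => //= i u ->. Qed.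

Lemma comp_commute i v x : {in v, forall a, ~~ adj i a && ~~ adj a i} ->
  f i (comp v x) = comp v (f i x).
Proof.
elim: v => [|a v IHv] //= iNadj.
have /andP[ia ai] := iNadj a (mem_head a v).
by rewrite f_comm // IHv // => b bv; apply: iNadj; rewrite in_cons bv orbT.
Qed.

Lemma comp_perm_eq u v : uniq u -> perm_eq u v ->
  {in u &, forall a b, adj a b -> (index a u < index b u) = (index a v < index b v)} ->
  comp u =1 comp v.
Proof.
elim: u v => [|i u IHu] v uu puv ord x.
  by rewrite perm_sym in puv; move/perm_nilP: puv => ->.
have iv : i \in v by rewrite -(perm_mem puv) mem_head.
move: puv ord; case/splitPr: iv => v1 v2 puv ord; case/andP: (uu) => iNu uu'.
have iNv1 : i \notin v1.
  by move: (uu); rewrite (perm_uniq puv) cat_uniq /= => /and3P[_ /norP[]].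
have iv1 : index i (v1 ++ i :: v2) = size v1.
  by rewrite index_cat (negbTE iNv1) /= eqxx addn0.
have indep : {in v1, forall a, ~~ adj i a && ~~ adj a i}.
  move=> a av1; have aNi : a != i by apply: contraNneq iNv1 => <-.
  have au : a \in i :: u by rewrite (perm_mem puv) mem_cat av1.
  have iva : index a (v1 ++ i :: v2) < size v1 by rewrite index_cat av1 index_mem.
  apply/andP; split; apply/negP => adj_ia.
  - move: (ord i a (mem_head i u) au adj_ia).
    by rewrite iv1 /= eqxx eq_sym (negbTE aNi) (leq_gtF (ltnW iva)).
  - by move: (ord a i au (mem_head i u) adj_ia); rewrite iv1 /= eqxx iva.
rewrite /= comp_cat /= -comp_commute // -comp_cat; congr (f i _); apply: IHu => //.
  by rewrite -(perm_cons i) (permPl puv) -cat1s perm_catCA.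
move=> a b au bu adj_ab.
have aNi : a != i by apply: contraNneq iNu => <-.
have bNi : b != i by apply: contraNneq iNu => <-.
move: (ord a b); rewrite !in_cons au bu !orbT => /(_ isT isT adj_ab).
rewrite /= !(eq_sym i) (negbTE aNi) (negbTE bNi) ltnS !index_insert //.
by rewrite [bump _ _ < _]ltnNge leq_bump2 -ltnNge.
Qed.

End PartialCommutation.

Lemma tperm_commute (T : finType) (x y z t : T) :
  x != z -> x != t -> y != z -> y != t ->
  commute (tperm x y) (tperm z t).
Proof.
move=> xz xt yz yt; have := tpermJ x y (tperm z t).
rewrite !tpermD 1?eq_sym // conjgE tpermV => /(congr1 (fun p => tperm z t * p)%g).
by rewrite !mulgA tperm2 mul1g.
Qed.
Local Open Scope ring_scope.

Section WeylAction.
Variables (R : realFieldType) (r : nat).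

Definition wperm (w : seq 'I_r) (k : 'I_r.+1) : 'I_r.+1 :=
  foldr (fun i => tperm (lo i) (hi i)) k w.

Lemma s_e i k : s R r i (e R r k) = e R r (tperm (lo i) (hi i) k).
Proof. by apply/rowP => j; rewrite !mxE (canF_eq (tpermK _ _)). Qed.

Lemma s_sub i x y : s R r i (x - y) = s R r i x - s R r i y.
Proof. by apply/rowP => j; rewrite !mxE. Qed.

Lemma s_commute (a b : 'I_r) : val b != (val a).+1 -> val a != (val b).+1 ->
  forall x, s R r a (s R r b x) = s R r b (s R r a x).
Proof.
move=> ba ab x; have [-> //|aNb] := eqVneq a b.
have tab : commute (tperm (lo a) (hi a)) (tperm (lo b) (hi b)).
  have {}aNb : val a != val b by rewrite val_eqE.
  move: aNb ba ab => /= aNb ba ab.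
  by apply: tperm_commute; apply/eqP => /(congr1 val); rewrite /= /bump /=; lia.
by apply/rowP => k; rewrite !mxE -!permM tab.
Qed.

Lemma wprod_e w k : wprod R r w (e R r k) = e R r (wperm w k).
Proof. by elim: w => [|i w IHw] //=; rewrite IHw s_e. Qed.

Lemma wprod_sub w x y : wprod R r w (x - y) = wprod R r w x - wprod R r w y.
Proof. by elim: w => [|i w IHw] //=; rewrite IHw s_sub. Qed.

Lemma wprod_theta w :
  wprod R r w (theta R r) = e R r (wperm w ord0) - e R r (wperm w ord_max).
Proof. by rewrite wprod_sub !wprod_e. Qed.

Lemma natb_sub_eq1 (p q : bool) : p%:R - q%:R = 1 :> R -> p.
Proof. by case: p; case: q => //=; rewrite ?subrr ?sub0r => eq1; exfalso; lra. Qed.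

Lemma e_sub_inj a b c d : a != b -> e R r a - e R r b = e R r c - e R r d ->
  a = c /\ b = d.
Proof.
move=> aNb eq_ab_cd.
have := congr1 (fun v : 'rV_(r.+1) => v 0 a) eq_ab_cd.
have := congr1 (fun v : 'rV_(r.+1) => - v 0 b) eq_ab_cd.
rewrite /= !mxE !eqxx (negbTE aNb) eq_sym (negbTE aNb) mulr1n mulr0n !opprB subr0.
by move=> /esym/natb_sub_eq1/eqP <- /esym/natb_sub_eq1/eqP <-.
Qed.

Lemma pos_root_e_subE a b : pos_root R r (e R r a - e R r b) <-> (a < b)%N.
Proof.
split=> [[i [j [lt_ij eq_ij]]]|lt_ab]; last by exists a, b.
have iNj : i != j by rewrite neq_ltn lt_ij.
by have [<- <-] := e_sub_inj iNj (esym eq_ij).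
Qed.

Lemma val_tperm_lo_hi (i : 'I_r) (k : 'I_r.+1) :
  val (tperm (lo i) (hi i) k) = adj_swap i (val k).
Proof.
case: tpermP => [->|->|kNlo kNhi]; rewrite ?adj_swapL ?adj_swapR //.
rewrite adj_swap_id //; apply/eqP => eq_k; [apply: kNlo | apply: kNhi].
  exact: val_inj.
exact: val_inj.
Qed.

Lemma val_wperm w k : val (wperm w k) = adj_swaps (map val w) (val k).
Proof. by elim: w => [|i w IHw] //=; rewrite val_tperm_lo_hi IHw. Qed.

Lemma Cword_val (m : 'I_r) : map val (Cword m) = cword r m.
Proof.
have le_mr : (m <= r)%N by apply: ltnW.
have val_filter (P : pred nat) :
    map val (filter (fun i : 'I_r => P i) (enum 'I_r)) = filter P (iota 0 r).
  by rewrite -val_enum_ord filter_map.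
rewrite /Cword /cword map_cat map_rev (val_filter (leq m)) (val_filter (ltn^~ m)).
by rewrite filter_iota_geq //; have := filter_iota_ltn 0 le_mr; rewrite add0n => ->.
Qed.

Lemma perm_Cword (m : 'I_r) : perm_eq (Cword m) (enum 'I_r).
Proof.
apply: perm_trans (permEl (perm_filterC (fun i : 'I_r => m <= i)%N _)).
rewrite perm_cat2l (permPl (permEl (perm_rev _))).
rewrite (@eq_filter _ _ (predC (fun i : 'I_r => m <= i)%N)) //.
by move=> i; rewrite /= -ltnNge.
Qed.

Lemma C_theta (m : 'I_r) : C R r m (theta R r) = - alpha R r m.
Proof.
rewrite /C wprod_theta /alpha opprB.
by congr (e R r _ - e R r _); apply/val_inj;
  rewrite val_wperm Cword_val ?cword_swaps0 ?cword_swapsr.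
Qed.

Lemma coxeter_eq_C w : (0 < r)%N -> perm_eq w (enum 'I_r) ->
  (val (wperm w ord_max) <= val (wperm w ord0))%N ->
  exists m, wprod R r w = C R r m.
Proof.
move=> r_gt0 w_perm le_wperm.
set u := map val w.
have uniq_w : uniq w by rewrite (perm_uniq w_perm) enum_uniq.
have uniq_u : uniq u by rewrite map_inj_uniq //; apply: val_inj.
have mono i j : (i <= j < r.-1)%N -> before u i -> before u j.
  move=> /andP[le_ij lt_jr]; apply: (before_monotone (n := r)) => //; last lia.
  by move: le_wperm; rewrite !val_wperm.
set m := find (before u) (iota 0 r.-1).
have lt_mr : (m < r)%N.
  by have := find_size (before u) (iota 0 r.-1); rewrite size_iota; lia.
exists (Ordinal lt_mr); apply: functional_extensionality => x.
apply: (@comp_perm_eq _ _ _ (fun a b : 'I_r => val b == (val a).+1)) => //.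
- exact: s_commute.
- by rewrite (permPl w_perm) perm_sym perm_Cword.
move=> a b _ _ /eqP ab; have lt_ar : ((val a).+1 < r)%N by rewrite -ab ltn_ord.
rewrite -!(index_map val_inj) ab Cword_val.
rewrite -/(before u (val a)) -/(before (cword r m) (val a)).
by rewrite (monotone_find_threshold mono) ?before_cword //; lia.
Qed.
End WeylAction.

Theorem lemma4 (R : realFieldType) (r : nat) (hr : (0 < r)%N) :
  (forall m : 'I_r, C R r m (theta R r) = - alpha R r m) /\
  (forall w : seq 'I_r, perm_eq w (enum 'I_r) ->
     (pos_root R r (wprod R r w (theta R r)) <->
      (forall m : 'I_r, wprod R r w <> C R r m))).
Proof.
split=> [|w w_perm]; first exact: C_theta.
rewrite wprod_theta pos_root_e_subE; split=> [lt_w m w_C | notC].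
  have : pos_root R r (C R r m (theta R r)) by rewrite -w_C wprod_theta pos_root_e_subE.
  by rewrite C_theta /alpha opprB pos_root_e_subE /= /bump /=; lia.
case: ltnP => // le_w; have [m w_C] := coxeter_eq_C R hr w_perm le_w.
by case: (notC m).
Qed.
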